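(* Let $f_{1,\infty}=\{f_n\}_{n=1}^\infty$ be a periodic sequence of continuous maps $f_n:[0,1]\to[0,1]$ (i.e. there is $k\in\mathbb{N}$ with $f_{j+kl}=f_j$ for all $l\in\mathbb{N}$, $1\le j\le k$). Then the following are equivalent for the non-autonomous system $([0,1],f_{1,\infty})$: (1) it is strongly multi-sensitive; (2) it is $\mathcal{N}$-sensitive; (3) it is multi-sensitive; (4) it is sensitive.
   Context: Use the usual metric on $[0,1]$. Write $f_i^n=f_{n+i-1}\circ\cdots\circ f_i$, $f_i^0=\mathrm{id}$, and $f_{1,\infty}^{[k]}=\{f^k_{k(n-1)+1}\}_{n=1}^\infty$ (its $n$-fold composition from index $1$ is $f_1^{kn}$). For $V\subseteq X$, $\delta>0$: $N_{f_{1,\infty}}(V,\delta)=\{n\in\mathbb{N}:\exists u,v\in V,\ d(f_1^n(u),f_1^n(v))>\delta\}$. The system is sensitive if there is $\delta>0$ with $N_{f_{1,\infty}}(V,\delta)\ne\varnothing$ for every nonempty open $V$; multi-sensitive if there is $\delta>0$ with $\bigcap_{i=1}^m N_{f_{1,\infty}}(V_i,\delta)\neq\varnothing$ for every finite collection of nonempty open $V_1,\dots,V_m$. For $\mathbf{v}=(v_1,\dots,v_r)\in\mathbb{N}^r$, it is multi-sensitive with respect to $\mathbf{v}$ if there is $\delta>0$ such that $\bigcap_{i=1}^r N_{f_{1,\infty}^{[v_i]}}(U_i,\delta)\ne\varnothing$ for all nonempty open $U_1,\dots,U_r$; $\mathcal{N}$-sensitive if multi-sensitive with respect to $(1,\dots,n)$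 for every $n$; strongly multi-sensitive if multi-sensitive with respect to every vector in $\mathbb{N}^r$ for every $r$. *)

(* the space [0,1] is represented as the subset I01 of R,
   with the usual metric |x - y| and the relative (subspace) topology. *)
From Stdlib Require Import Reals Lra Lia.
Open Scope R_scope.

Definition I01 (x : R) : Prop := 0 <= x <= 1.

Definition maps_I01 (f : R -> R) : Prop := forall x, I01 x -> I01 (f x).

Definition cont_I01 (f : R -> R) : Prop :=
  forall x, I01 x -> forall eps, 0 < eps ->
    exists del, 0 < del /\
      forall y, I01 y -> Rabs (y - x) < del -> Rabs (f y - f x) < eps.

Definition open_I01 (V : R -> Prop) : Prop :=
  (forall x, V x -> I01 x) /\
  (forall x, V x -> exists eps, 0 < eps /\
      forall y, I01 y -> Rabs (y - x) < eps -> V y).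

Definition nonempty_open_I01 (V : R -> Prop) : Prop :=
  open_I01 V /\ exists x, V x.

(* Sequences f_1, f_2, ... are 1-indexed: f : nat -> (R -> R), f 0 unused.
   comp f i n = f_i^n = f_{n+i-1} o ... o f_i, comp f i 0 = id. *)
Fixpoint comp (f : nat -> R -> R) (i n : nat) (x : R) : R :=
  match n with
  | O => x
  | S m => f (i + m)%nat (comp f i m x)
  end.

Definition power_seq (f : nat -> R -> R) (k : nat) : nat -> R -> R :=
  fun n => comp f (k * (n - 1) + 1)%nat k.

Definition Nset (f : nat -> R -> R) (V : R -> Prop) (delta : R) (n : nat) : Prop :=
  (1 <= n)%nat /\
  exists u v, V u /\ V v /\ Rabs (comp f 1 n u - comp f 1 n v) > delta.

Definition sensitive (f : nat -> R -> R) : Prop :=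
  exists delta, 0 < delta /\
    forall V, nonempty_open_I01 V -> exists n, Nset f V delta n.

Definition multi_sensitive (f : nat -> R -> R) : Prop :=
  exists delta, 0 < delta /\
    forall (m : nat) (V : nat -> R -> Prop), (1 <= m)%nat ->
      (forall i, (1 <= i <= m)%nat -> nonempty_open_I01 (V i)) ->
      exists n, forall i, (1 <= i <= m)%nat -> Nset f (V i) delta n.

Definition multi_sensitive_wrt (f : nat -> R -> R) (r : nat) (v : nat -> nat) : Prop :=
  exists delta, 0 < delta /\
    forall U : nat -> R -> Prop,
      (forall i, (1 <= i <= r)%nat -> nonempty_open_I01 (U i)) ->
      exists n, forall i, (1 <= i <= r)%nat ->
        Nset (power_seq f (v i)) (U i) delta n.

Definition N_sensitive (f : nat -> R -> R) : Prop :=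
  forall n : nat, (1 <= n)%nat -> multi_sensitive_wrt f n (fun i => i).

Definition strongly_multi_sensitive (f : nat -> R -> R) : Prop :=
  forall (r : nat) (v : nat -> nat), (1 <= r)%nat ->
    (forall i, (1 <= i <= r)%nat -> (1 <= v i)%nat) ->
    multi_sensitive_wrt f r v.

Definition periodic (f : nat -> R -> R) : Prop :=
  exists k : nat, (1 <= k)%nat /\
    forall l j, (1 <= l)%nat -> (1 <= j <= k)%nat ->
      forall x, I01 x -> f (j + k * l)%nat x = f j x.

From Pilot Require Import Defs.
From Stdlib Require Import Reals Lra Lia ZArith.
Open Scope R_scope.

(* Sensitivity is the weakest of the four notions, so the content is that
   sensitivity implies strong multi-sensitivity.  If k is a period and
   g := f_1^k, the orbit at time kq + r is g^q followed by one of the finitely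
   many, hence uniformly equicontinuous, maps f_1^r with r < k; so g is a
   sensitive interval map.  For an interval map, once g^m spreads an interval
   by more than dg its image contains a cell of the grid of mesh dg/2.  Every
   cell is spread by more than dg within a bounded time T, and by at least
   some eta > 0 at each time up to T, because no iterate of g is constant on an
   interval.  Chaining these, every interval is spread by eta at all large
   times, with eta independent of the interval, which gives a common time for
   any finite family of open sets and any powers f^[v_i]. *)

(* [Reals] also exports a function [comp]. *)
Local Notation comp := Defs.comp.

Lemma finite_upper_bound (M : nat) (P : nat -> nat -> Prop) :
  (forall i N N', (N <= N')%nat -> P i N -> P i N') ->
  (forall i, (i <= M)%nat -> exists N, P i N) ->
  exists N, forall i, (i <= M)%nat -> P i N.
Proof.
  intros P_mono. induction M as [|M IH]; intros HP.
  - destruct (HP 0%nat (le_n 0)) as [N HN].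
    exists N. intros i Hi. now replace i with 0%nat by lia.
  - destruct IH as [N1 HN1]; [intros i Hi; apply HP; lia|].
    destruct (HP (S M) (le_n _)) as [N2 HN2].
    exists (Nat.max N1 N2). intros i Hi.
    destruct (Nat.eq_dec i (S M)) as [->|Hne].
    + apply (P_mono _ N2); [lia|exact HN2].
    + apply (P_mono _ N1); [lia|apply HN1; lia].
Qed.

Lemma finite_pos_lower_bound (M : nat) (P : nat -> R -> Prop) :
  (forall i e e', 0 < e' <= e -> P i e -> P i e') ->
  (forall i, (i <= M)%nat -> exists e, 0 < e /\ P i e) ->
  exists e, 0 < e /\ forall i, (i <= M)%nat -> P i e.
Proof.
  intros P_anti. induction M as [|M IH]; intros HP.
  - destruct (HP 0%nat (le_n 0)) as [e [He HPe]].
    exists e. split; [exact He|]. intros i Hi. now replace i with 0%nat by lia.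
  - destruct IH as [e1 [He1 HP1]]; [intros i Hi; apply HP; lia|].
    destruct (HP (S M) (le_n _)) as [e2 [He2 HP2]].
    pose proof (Rmin_l e1 e2); pose proof (Rmin_r e1 e2); pose proof (Rmin_pos e1 e2 He1 He2).
    exists (Rmin e1 e2). split; [assumption|]. intros i Hi.
    destruct (Nat.eq_dec i (S M)) as [->|Hne].
    + apply (P_anti _ e2); [lra|exact HP2].
    + apply (P_anti _ e1); [lra|apply HP1; lia].
Qed.

Lemma Rmax_Rmin_dist u v : Rmax u v - Rmin u v = Rabs (u - v).
Proof. unfold Rmax, Rmin, Rabs. destruct Rle_dec; destruct Rcase_abs; lra. Qed.

Lemma open_interval_nonempty_open a b :
  0 <= a -> a < b -> b <= 1 -> nonempty_open_I01 (fun x => a < x < b).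
Proof.
  intros Ha Hab Hb. split; [split|].
  - intros x Hx. unfold I01; lra.
  - intros x Hx. exists (Rmin (x - a) (b - x)). split; [apply Rmin_pos; lra|].
    intros y _ Hy. apply Rabs_def2 in Hy.
    pose proof (Rmin_l (x - a) (b - x)); pose proof (Rmin_r (x - a) (b - x)). lra.
  - exists ((a + b) / 2). lra.
Qed.

Lemma nonempty_open_contains_interval U : nonempty_open_I01 U ->
  exists a b, 0 <= a /\ a < b /\ b <= 1 /\ forall x, a < x < b -> U x.
Proof.
  intros [[U_I01 U_open] [x Ux]].
  destruct (U_open x Ux) as [eps [Heps Hball]].
  pose proof (U_I01 x Ux) as Hx. unfold I01 in Hx.
  exists (Rmax 0 (x - eps / 2)), (Rmin 1 (x + eps / 2)).
  unfold Rmax, Rmin in *. repeat split; try (repeat destruct Rle_dec; lra).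
  intros y Hy. apply Hball.
  - unfold I01. repeat destruct Rle_dec; lra.
  - apply Rabs_def1; repeat destruct Rle_dec; lra.
Qed.

Definition clamp (x : R) : R := Rmax 0 (Rmin x 1).

Lemma clamp_I01 x : I01 (clamp x).
Proof. unfold clamp, I01, Rmax, Rmin. repeat destruct Rle_dec; lra. Qed.

Lemma clamp_id x : I01 x -> clamp x = x.
Proof. unfold clamp, I01, Rmax, Rmin. intros. repeat destruct Rle_dec; lra. Qed.

Lemma clamp_lipschitz x y : Rabs (clamp y - clamp x) <= Rabs (y - x).
Proof.
  unfold clamp, Rmax, Rmin, Rabs.
  repeat destruct Rle_dec; repeat destruct Rcase_abs; lra.
Qed.

Lemma continuity_clamp h : cont_I01 h -> continuity (fun x => h (clamp x)).
Proof.
  intros Hh x eps Heps.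
  destruct (Hh (clamp x) (clamp_I01 x) eps Heps) as [del [Hdel Hd]].
  exists del. split; [exact Hdel|]. intros y [_ Hy]. simpl in *. unfold R_dist in *.
  apply Hd; [apply clamp_I01|]. pose proof (clamp_lipschitz x y). lra.
Qed.

Lemma cont_I01_ivt h a b x y p : cont_I01 h -> 0 <= a -> b <= 1 ->
  a < x < b -> a < y < b -> Rmin (h x) (h y) <= p <= Rmax (h x) (h y) ->
  exists z, a < z < b /\ h z = p.
Proof.
  intros Hh Ha Hb.
  assert (ordered : forall x y, x <= y -> a < x < b -> a < y < b ->
            (h x - p) * (h y - p) <= 0 -> exists z, a < z < b /\ h z = p).
  { intros x' y' Hxy Hx Hy Hp.
    destruct (IVT_cor (fun z => h (clamp z) - p) x' y') as [z [Hz Hz0]];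
      [apply continuity_minus; [now apply continuity_clamp|apply continuity_const; now intros ? ?]
      |exact Hxy|rewrite !clamp_id by (unfold I01; lra); exact Hp|].
    exists z. split; [lra|]. rewrite clamp_id in Hz0 by (unfold I01; lra). lra. }
  intros Hx Hy Hp. unfold Rmin, Rmax in Hp.
  destruct (Rle_dec x y); [apply (ordered x y)|apply (ordered y x)]; try lra;
    destruct (Rle_dec (h x) (h y)); nra.
Qed.

Lemma cont_I01_uniform h eps : cont_I01 h -> 0 < eps ->
  exists delta, 0 < delta /\ forall x y, I01 x -> I01 y ->
    Rabs (x - y) < delta -> Rabs (h x - h y) < eps.
Proof.
  intros Hh Heps.
  destruct (Heine (fun x => h (clamp x)) I01 (compact_P3 0 1)
              (fun x _ => continuity_clamp h Hh x) (mkposreal eps Heps)) as [[delta Hdelta] Hunif].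
  exists delta. split; [exact Hdelta|]. intros x y Hx Hy Hxy.
  pose proof (Hunif x y Hx Hy Hxy) as H. simpl in H. now rewrite !clamp_id in H.
Qed.

Lemma cont_I01_comp g h : cont_I01 g -> cont_I01 h -> maps_I01 h ->
  cont_I01 (fun x => g (h x)).
Proof.
  intros Hg Hh Hm x Hx eps Heps.
  destruct (Hg (h x) (Hm x Hx) eps Heps) as [d1 [Hd1 H1]].
  destruct (Hh x Hx d1 Hd1) as [d2 [Hd2 H2]].
  exists d2. split; [exact Hd2|]. intros y Hy Hyx. apply H1; auto.
Qed.

Lemma cont_I01_id : cont_I01 (fun x => x).
Proof. intros x _ eps Heps. exists eps. split; auto. Qed.

Definition spreads (h : R -> R) (a b e : R) : Prop :=
  exists x y, a < x < b /\ a < y < b /\ Rabs (h x - h y) > e.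

Lemma spreads_le h a b e e' : e' <= e -> spreads h a b e -> spreads h a b e'.
Proof. intros He [x [y [Hx [Hy Hxy]]]]. exists x, y. repeat split; lra. Qed.

Lemma spreads_0_pos h a b : spreads h a b 0 -> exists e, 0 < e /\ spreads h a b e.
Proof.
  intros [x [y [Hx [Hy Hxy]]]]. exists (Rabs (h x - h y) / 2).
  split; [lra|]. exists x, y. repeat split; lra.
Qed.

Lemma spreads_comp h k a b c d e :
  (forall p, c < p < d -> exists z, a < z < b /\ h z = p) ->
  spreads k c d e -> spreads (fun z => k (h z)) a b e.
Proof.
  intros Hcover [p [q [Hp [Hq Hpq]]]].
  destruct (Hcover p Hp) as [x [Hx <-]]. destruct (Hcover q Hq) as [y [Hy <-]].
  now exists x, y.
Qed.

Section Interval_map.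

Variable g : R -> R.
Hypothesis g_maps : maps_I01 g.
Hypothesis g_cont : cont_I01 g.

Lemma iter_maps n : maps_I01 (Nat.iter n g).
Proof. induction n as [|n IH]; intros x Hx; simpl; auto. Qed.

Lemma iter_cont n : cont_I01 (Nat.iter n g).
Proof.
  induction n as [|n IH]; [exact cont_I01_id|].
  exact (cont_I01_comp g _ g_cont IH (iter_maps n)).
Qed.

Lemma iter_image_covers m a b x y : 0 <= a -> b <= 1 -> a < x < b -> a < y < b ->
  forall p, Rmin (Nat.iter m g x) (Nat.iter m g y) < p < Rmax (Nat.iter m g x) (Nat.iter m g y) ->
  exists z, a < z < b /\ Nat.iter m g z = p.
Proof.
  intros Ha Hb Hx Hy p Hp.
  apply (cont_I01_ivt _ a b x y); auto using iter_cont; lra.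
Qed.

Lemma iter_Rmin_Rmax_I01 m x y : I01 x -> I01 y ->
  0 <= Rmin (Nat.iter m g x) (Nat.iter m g y) /\ Rmax (Nat.iter m g x) (Nat.iter m g y) <= 1.
Proof.
  intros Hx Hy. pose proof (iter_maps m x Hx); pose proof (iter_maps m y Hy).
  unfold I01 in *. split; [apply Rmin_glb|apply Rmax_lub]; lra.
Qed.

Variable dg : R.
Hypothesis dg_pos : 0 < dg.
Hypothesis g_sensitive : forall a b, 0 <= a -> a < b -> b <= 1 ->
  exists q, (1 <= q)%nat /\ spreads (Nat.iter q g) a b dg.

Lemma g_nonconstant a b : 0 <= a -> a < b -> b <= 1 -> spreads g a b 0.
Proof.
  intros Ha Hab Hb.
  destruct (g_sensitive a b Ha Hab Hb) as [q [Hq [x [y [Hx [Hy Hxy]]]]]].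
  destruct (Req_dec (g x) (g y)) as [E|E].
  - replace q with (S (q - 1)) in Hxy by lia.
    rewrite !Nat.iter_succ_r, E, Rminus_diag, Rabs_R0 in Hxy. lra.
  - exists x, y. repeat split; try lra. apply Rabs_pos_lt. lra.
Qed.

Lemma iter_nonconstant n a b : 0 <= a -> a < b -> b <= 1 -> spreads (Nat.iter n g) a b 0.
Proof.
  intros Ha Hab Hb. induction n as [|n [x [y [Hx [Hy Hxy]]]]].
  - exists ((2 * a + b) / 3), ((a + 2 * b) / 3). simpl.
    repeat split; try lra. rewrite Rabs_left; lra.
  - destruct (iter_Rmin_Rmax_I01 n x y) as [Hc Hd]; [unfold I01; lra..|].
    pose proof (Rmax_Rmin_dist (Nat.iter n g x) (Nat.iter n g y)).
    apply (spreads_comp _ g a b _ _ 0 (iter_image_covers n a b x y Ha Hb Hx Hy)).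
    apply g_nonconstant; [exact Hc|lra|exact Hd].
Qed.

(* Grid cells are the intervals (j * mesh, (j+1) * mesh); the mesh dg/2 makes
   every interval longer than dg contain a whole cell. *)
Let mesh := dg / 2.

Lemma cell_nonempty j : 0 <= INR j * mesh < INR (S j) * mesh.
Proof.
  pose proof (pos_INR j). rewrite S_INR. unfold mesh. split; nra.
Qed.

Lemma cell_between c d : 0 <= c -> c + dg < d ->
  exists j, c < INR j * mesh /\ INR (S j) * mesh < d.
Proof.
  intros Hc Hcd. assert (Hmesh : 0 < mesh) by (unfold mesh; lra).
  destruct (archimed (c / mesh)) as [Hup Hup1].
  assert (Hquot : 0 <= c / mesh) by (apply Rmult_le_pos; [|apply Rlt_le, Rinv_0_lt_compat]; lra).
  assert (Hz : (0 < up (c / mesh))%Z) by (apply lt_IZR; lra).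
  exists (Z.to_nat (up (c / mesh))).
  rewrite S_INR, INR_IZR_INZ, Z2Nat.id by lia.
  assert (c = c / mesh * mesh) by (field; lra).
  unfold mesh in *. split; nra.
Qed.

Lemma cell_index_bound : exists M, forall j, INR (S j) * mesh <= 1 -> (j <= M)%nat.
Proof.
  assert (Hmesh : 0 < mesh) by (unfold mesh; lra).
  destruct (archimed_cor1 mesh Hmesh) as [N [HN HN0]].
  assert (HNpos : 0 < INR N) by (apply lt_0_INR; lia).
  assert (1 < INR N * mesh).
  { apply (Rmult_lt_reg_l (/ INR N)); [now apply Rinv_0_lt_compat|].
    rewrite <- Rmult_assoc, Rinv_l, Rmult_1_l, Rmult_1_r; lra. }
  exists N. intros j Hj. destruct (le_lt_dec j N) as [|HjN]; [assumption|].
  pose proof (le_INR N (S j) ltac:(lia)). nra.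
Qed.

Lemma return_time_bound : exists T, forall j, INR (S j) * mesh <= 1 ->
  exists s, (1 <= s <= T)%nat /\ spreads (Nat.iter s g) (INR j * mesh) (INR (S j) * mesh) dg.
Proof.
  destruct cell_index_bound as [M HM].
  destruct (finite_upper_bound M (fun j T => INR (S j) * mesh <= 1 ->
      exists s, (1 <= s <= T)%nat /\ spreads (Nat.iter s g) (INR j * mesh) (INR (S j) * mesh) dg))
    as [T HT].
  - intros j T T' HTT' H Hj. destruct (H Hj) as [s [Hs Hsp]]. exists s. split; [lia|exact Hsp].
  - intros j _. destruct (Rle_dec (INR (S j) * mesh) 1) as [Hj|Hj]; [|now exists 0%nat].
    destruct (cell_nonempty j) as [Hlo Hhi].
    destruct (g_sensitive _ _ Hlo Hhi Hj) as [q [Hq Hsp]].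
    exists q. intros _. exists q. split; [lia|exact Hsp].
  - exists T. intros j Hj. exact (HT j (HM j Hj) Hj).
Qed.

Lemma cell_spread_lower_bound T : exists eta, 0 < eta /\
  forall j, INR (S j) * mesh <= 1 ->
  forall s, (s <= T)%nat -> spreads (Nat.iter s g) (INR j * mesh) (INR (S j) * mesh) eta.
Proof.
  destruct cell_index_bound as [M HM].
  destruct (finite_pos_lower_bound M (fun j e => INR (S j) * mesh <= 1 ->
      forall s, (s <= T)%nat -> spreads (Nat.iter s g) (INR j * mesh) (INR (S j) * mesh) e))
    as [eta [Heta HE]].
  - intros j e e' He H Hj s Hs. apply (spreads_le _ _ _ e); [lra|auto].
  - intros j _. destruct (Rle_dec (INR (S j) * mesh) 1) as [Hj|Hj]; [|now exists 1; split; [lra|]].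
    destruct (cell_nonempty j) as [Hlo Hhi].
    destruct (finite_pos_lower_bound T (fun s e =>
        spreads (Nat.iter s g) (INR j * mesh) (INR (S j) * mesh) e)) as [e [He Hs]].
    + intros s e e' He' H. apply (spreads_le _ _ _ e); [lra|auto].
    + intros s _. exact (spreads_0_pos _ _ _ (iter_nonconstant s _ _ Hlo Hhi Hj)).
    + exists e. split; [exact He|]. intros _. exact Hs.
  - exists eta. split; [exact Heta|]. intros j Hj. exact (HE j (HM j Hj) Hj).
Qed.

Lemma spreads_transfer m a b : 0 <= a -> b <= 1 -> spreads (Nat.iter m g) a b dg ->
  exists j, INR (S j) * mesh <= 1 /\ forall s e,
    spreads (Nat.iter s g) (INR j * mesh) (INR (S j) * mesh) e ->
    spreads (Nat.iter (s + m) g) a b e.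
Proof.
  intros Ha Hb [x [y [Hx [Hy Hxy]]]].
  destruct (iter_Rmin_Rmax_I01 m x y) as [Hc Hd]; [unfold I01; lra..|].
  pose proof (Rmax_Rmin_dist (Nat.iter m g x) (Nat.iter m g y)).
  destruct (cell_between (Rmin (Nat.iter m g x) (Nat.iter m g y))
              (Rmax (Nat.iter m g x) (Nat.iter m g y)) Hc ltac:(lra)) as [j [Hlo Hhi]].
  exists j. split; [lra|]. intros s e Hsp.
  assert (Hcover : forall p, INR j * mesh < p < INR (S j) * mesh ->
            exists z, a < z < b /\ Nat.iter m g z = p).
  { intros p Hp. apply (iter_image_covers m a b x y Ha Hb Hx Hy). lra. }
  destruct (spreads_comp _ _ a b _ _ e Hcover Hsp) as [x' [y' [Hx' [Hy' Hxy']]]].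
  exists x', y'. now rewrite !Nat.iter_add.
Qed.

Theorem interval_map_cofinitely_sensitive : exists eta, 0 < eta /\
  forall a b, 0 <= a -> a < b -> b <= 1 ->
  exists Q, forall q, (Q <= q)%nat -> spreads (Nat.iter q g) a b eta.
Proof.
  destruct return_time_bound as [T HT].
  destruct (cell_spread_lower_bound T) as [eta [Heta HE]].
  exists eta. split; [exact Heta|]. intros a b Ha Hab Hb.
  assert (next : forall m, spreads (Nat.iter m g) a b dg ->
    exists m', (m < m')%nat /\ spreads (Nat.iter m' g) a b dg /\
      forall t, (m < t <= m')%nat -> spreads (Nat.iter t g) a b eta).
  { intros m Hm. destruct (spreads_transfer m a b Ha Hb Hm) as [j [Hj Htransfer]].
    destruct (HT j Hj) as [s [Hs Hsp]].
    exists (s + m)%nat. split; [lia|split; [exact (Htransfer _ _ Hsp)|]].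
    intros t Ht. replace t with ((t - m) + m)%nat by lia.
    apply Htransfer, HE; [exact Hj|lia]. }
  destruct (g_sensitive a b Ha Hab Hb) as [n [_ Hn]].
  assert (chain : forall i, exists m, (n + i <= m)%nat /\ spreads (Nat.iter m g) a b dg /\
      forall t, (n < t <= m)%nat -> spreads (Nat.iter t g) a b eta).
  { induction i as [|i [m [Hm [Hdg Hupto]]]].
    - exists n. split; [lia|split; [exact Hn|intros t Ht; lia]].
    - destruct (next m Hdg) as [m' [Hmm' [Hdg' Hbetween]]].
      exists m'. split; [lia|split; [exact Hdg'|]].
      intros t Ht. destruct (Nat.le_gt_cases t m); [apply Hupto|apply Hbetween]; lia. }
  exists (S n). intros q Hq. destruct (chain q) as [m [Hm [_ Hupto]]]. apply Hupto. lia.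
Qed.

End Interval_map.

Lemma comp_add (f : nat -> R -> R) i n m x :
  comp f i (n + m) x = comp f (i + n) m (comp f i n x).
Proof.
  induction m as [|m IH]; simpl.
  - now rewrite Nat.add_0_r.
  - rewrite Nat.add_succ_r. simpl. now rewrite IH, Nat.add_assoc.
Qed.

Lemma comp_power_seq (f : nat -> R -> R) v n x :
  comp (power_seq f v) 1 n x = comp f 1 (v * n) x.
Proof.
  induction n as [|n IH]; simpl.
  - now rewrite Nat.mul_0_r.
  - rewrite IH. unfold power_seq. replace (1 + n - 1)%nat with n by lia.
    replace (v * S n)%nat with (v * n + v)%nat by lia.
    rewrite comp_add. f_equal. lia.
Qed.

Lemma Nset_power_seq_1 (f : nat -> R -> R) V d n : Nset (power_seq f 1) V d n -> Nset f V d n.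
Proof.
  intros [Hn [u [v [Hu [Hv Huv]]]]]. split; [exact Hn|]. exists u, v.
  now rewrite !comp_power_seq, Nat.mul_1_l in Huv.
Qed.

Section Periodic.

Variable f : nat -> R -> R.
Hypothesis f_maps : forall n, (1 <= n)%nat -> maps_I01 (f n).
Hypothesis f_cont : forall n, (1 <= n)%nat -> cont_I01 (f n).
Variable k : nat.
Hypothesis k_pos : (1 <= k)%nat.
Hypothesis f_period : forall l j, (1 <= l)%nat -> (1 <= j <= k)%nat ->
  forall x, I01 x -> f (j + k * l)%nat x = f j x.

Lemma comp_maps i n : (1 <= i)%nat -> maps_I01 (comp f i n).
Proof. intros Hi. induction n as [|n IH]; intros x Hx; simpl; auto. apply f_maps; [lia|auto]. Qed.

Lemma comp_cont i n : (1 <= i)%nat -> cont_I01 (comp f i n).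
Proof.
  intros Hi. induction n as [|n IH]; [exact cont_I01_id|].
  apply (cont_I01_comp (f (i + n)%nat)); [apply f_cont; lia|exact IH|now apply comp_maps].
Qed.

Lemma f_periodic i q x : (1 <= i)%nat -> I01 x -> f (i + k * q)%nat x = f i x.
Proof.
  intros Hi Hx.
  assert (shift : forall j l, (1 <= j <= k)%nat -> f (j + k * l)%nat x = f j x).
  { intros j [|l] Hj; [now rewrite Nat.mul_0_r, Nat.add_0_r|apply f_period; auto; lia]. }
  pose proof (Nat.div_mod_eq (i - 1) k). pose proof (Nat.mod_upper_bound (i - 1) k ltac:(lia)).
  replace i with ((i - 1) mod k + 1 + k * ((i - 1) / k))%nat by lia.
  replace (_ + k * _ + k * q)%nat with ((i - 1) mod k + 1 + k * ((i - 1) / k + q))%nat by ring.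
  rewrite !shift; [reflexivity|lia..].
Qed.

Lemma comp_periodic i q r x : (1 <= i)%nat -> I01 x ->
  comp f (i + k * q) r x = comp f i r x.
Proof.
  intros Hi Hx. induction r as [|r IH]; simpl; [reflexivity|].
  rewrite IH. replace (i + k * q + r)%nat with ((i + r) + k * q)%nat by lia.
  apply f_periodic; [lia|now apply comp_maps].
Qed.

Definition period_map : R -> R := comp f 1 k.

Lemma period_map_maps : maps_I01 period_map.
Proof. now apply comp_maps. Qed.

Lemma period_map_cont : cont_I01 period_map.
Proof. now apply comp_cont. Qed.

Lemma comp_period_map q r x : I01 x ->
  comp f 1 (k * q + r) x = comp f 1 r (Nat.iter q period_map x).
Proof.
  revert x. induction q as [|q IH]; intros x Hx.
  - now rewrite Nat.mul_0_r.
  - replace (k * S q + r)%nat with (k + (k * q + r))%nat by ring.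
    rewrite comp_add, Nat.iter_succ_r, <- IH by exact (period_map_maps x Hx).
    replace (1 + k)%nat with (1 + k * 1)%nat by lia.
    apply comp_periodic; [lia|exact (period_map_maps x Hx)].
Qed.

Lemma period_map_sensitive : sensitive f -> exists dg, 0 < dg /\
  forall a b, 0 <= a -> a < b -> b <= 1 ->
  exists q, (1 <= q)%nat /\ spreads (Nat.iter q period_map) a b dg.
Proof.
  intros [d [Hd Hsens]].
  destruct (finite_pos_lower_bound k (fun r rho => forall x y, I01 x -> I01 y ->
      Rabs (x - y) < rho -> Rabs (comp f 1 r x - comp f 1 r y) < d)) as [rho [Hrho Hequi]].
  - intros r e e' He H x y Hx Hy Hxy. apply H; auto. lra.
  - intros r _. apply cont_I01_uniform; [apply comp_cont; lia|exact Hd].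
  - exists (rho / 2). split; [lra|]. intros a b Ha Hab Hb.
    set (b' := Rmin b (a + rho / 2)).
    assert (Hb' : a < b' <= b /\ b' <= a + rho / 2) by (unfold b', Rmin; destruct Rle_dec; lra).
    destruct (Hsens (fun x => a < x < b')) as [n [_ [u [v [Hu [Hv Huv]]]]]];
      [apply open_interval_nonempty_open; lra|].
    assert (Hu01 : I01 u) by (unfold I01; lra). assert (Hv01 : I01 v) by (unfold I01; lra).
    rewrite (Nat.div_mod_eq n k), !comp_period_map in Huv by assumption.
    set (q := (n / k)%nat) in Huv.
    (* the maps f_1^r, r <= k, are rho-equicontinuous, so the separation
       at time k q + r is already present, at scale rho, at time q of g *)
    assert (Hfar : rho <= Rabs (Nat.iter q period_map u - Nat.iter q period_map v)).
    { apply Rnot_lt_le. intros Hnear.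
      pose proof (Hequi (n mod k)%nat (Nat.lt_le_incl _ _ (Nat.mod_upper_bound n k ltac:(lia)))
        _ _ (iter_maps _ period_map_maps q u Hu01) (iter_maps _ period_map_maps q v Hv01) Hnear).
      lra. }
    exists q. split.
    + destruct (Nat.eq_dec q 0) as [E|E]; [|lia].
      rewrite E in Hfar. simpl in Hfar.
      assert (Rabs (u - v) < rho / 2) by (apply Rabs_def1; lra). lra.
    + exists u, v. repeat split; lra.
Qed.

Lemma sensitive_multi_sensitive_wrt_uniform : sensitive f -> exists eta, 0 < eta /\
  forall r (v : nat -> nat) (U : nat -> R -> Prop),
    (forall i, (1 <= i <= r)%nat -> (1 <= v i)%nat) ->
    (forall i, (1 <= i <= r)%nat -> nonempty_open_I01 (U i)) ->
    exists n, forall i, (1 <= i <= r)%nat -> Nset (power_seq f (v i)) (U i) eta n.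
Proof.
  intros Hs. destruct (period_map_sensitive Hs) as [dg [Hdg Hg]].
  destruct (interval_map_cofinitely_sensitive period_map period_map_maps period_map_cont
              dg Hdg Hg) as [eta [Heta Hcof]].
  exists eta. split; [exact Heta|]. intros r v U Hv HU.
  destruct (finite_upper_bound r (fun i Q => (1 <= i <= r)%nat -> forall q, (Q <= q)%nat ->
      exists u w, U i u /\ U i w /\
        Rabs (Nat.iter q period_map u - Nat.iter q period_map w) > eta)) as [Q HQ].
  - intros i Q Q' HQQ' H Hi q Hq. apply H; [exact Hi|lia].
  - intros i Hir. destruct (Nat.eq_dec i 0) as [->|Hi0]; [exists 0%nat; lia|].
    destruct (nonempty_open_contains_interval (U i) (HU i ltac:(lia)))
      as [a [b [Ha [Hab [Hb Hsub]]]]].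
    destruct (Hcof a b Ha Hab Hb) as [Q HQ].
    exists Q. intros _ q Hq. destruct (HQ q Hq) as [x [y [Hx [Hy Hxy]]]].
    exists x, y. auto.
  - exists (k * S Q)%nat. intros i Hi. split; [nia|].
    destruct (HQ i ltac:(lia) Hi (v i * S Q)%nat) as [u [w [Hu [Hw Huw]]]];
      [pose proof (Hv i Hi); nia|].
    destruct (HU i Hi) as [[HUI _] _].
    exists u, w. split; [exact Hu|split; [exact Hw|]].
    rewrite !comp_power_seq.
    replace (v i * (k * S Q))%nat with (k * (v i * S Q) + 0)%nat by ring.
    rewrite !comp_period_map by auto. exact Huw.
Qed.

Lemma sensitive_strongly_multi_sensitive : sensitive f -> strongly_multi_sensitive f.
Proof.
  intros Hs r v _ Hv. destruct (sensitive_multi_sensitive_wrt_uniform Hs) as [eta [Heta H]].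
  exists eta. split; [exact Heta|]. intros U HU. exact (H r v U Hv HU).
Qed.

Lemma sensitive_multi_sensitive : sensitive f -> multi_sensitive f.
Proof.
  intros Hs. destruct (sensitive_multi_sensitive_wrt_uniform Hs) as [eta [Heta H]].
  exists eta. split; [exact Heta|]. intros m V _ HV.
  destruct (H m (fun _ => 1%nat) V) as [n Hn]; auto.
  exists n. intros i Hi. exact (Nset_power_seq_1 f _ _ _ (Hn i Hi)).
Qed.

End Periodic.

Lemma strongly_multi_sensitive_N_sensitive f : strongly_multi_sensitive f -> N_sensitive f.
Proof. intros H n Hn. apply H; [exact Hn|intros i Hi; lia]. Qed.

Lemma N_sensitive_sensitive f : N_sensitive f -> sensitive f.
Proof.
  intros H. destruct (H 1%nat (le_n 1)) as [d [Hd HU]].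
  exists d. split; [exact Hd|]. intros V HV.
  destruct (HU (fun _ => V)) as [n Hn]; [auto|].
  exists n. apply Nset_power_seq_1, (Hn 1%nat). lia.
Qed.

Lemma multi_sensitive_sensitive f : multi_sensitive f -> sensitive f.
Proof.
  intros [d [Hd H]]. exists d. split; [exact Hd|]. intros V HV.
  destruct (H 1%nat (fun _ => V)) as [n Hn]; [lia|auto|].
  exists n. apply (Hn 1%nat). lia.
Qed.

Theorem mainTheorem2 (f : nat -> R -> R)
  (hmap : forall n, (1 <= n)%nat -> maps_I01 (f n))
  (hcont : forall n, (1 <= n)%nat -> cont_I01 (f n))
  (hper : periodic f) :
  (strongly_multi_sensitive f <-> N_sensitive f) /\
  (N_sensitive f <-> multi_sensitive f) /\
  (multi_sensitive f <-> sensitive f).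
Proof.
  destruct hper as [k [Hk Hper]].
  pose proof (sensitive_strongly_multi_sensitive f hmap hcont k Hk Hper).
  pose proof (sensitive_multi_sensitive f hmap hcont k Hk Hper).
  pose proof (strongly_multi_sensitive_N_sensitive f).
  pose proof (N_sensitive_sensitive f).
  pose proof (multi_sensitive_sensitive f).
  repeat split; auto.
Qed.
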